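(* Let $G=(V,E)$ be a network, $\Sigma$ an alphabet, $D\subseteq\Sigma^{|V|}$ and $f\colon D\to\Sigma^{|V|}$. Suppose $\mathscr{P}$ is a $T$-round quantum LOCAL protocol on $G$ such that for every input $x\in D$ (node $u$ receiving $x_u$), with probability strictly larger than $1/2$ every node $u\in V$ outputs $f(x)_u$. Then there exists a $T$-round deterministic classical LOCAL protocol on $G$ in which, for every $x\in D$, every node $u\in V$ outputs $f(x)_u$.
   Context: LOCAL model: synchronous rounds on an undirected graph; each node has a distinct identifier, knows its incident edges and the number of nodes, and in each round may do arbitrary local computation and send one message of unbounded size to each neighbour. In the quantum LOCAL model processors are quantum and messages are quantum states, with no initial shared entanglement; in the classical model processors and messages are classical. *)

From HB Require Import structures.
From mathcomp Require Import all_boot all_order all_algebra.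
From mathcomp Require Import complex.
From mathcomp Require Import Rstruct.
Set Implicit Arguments. Unset Strict Implicit. Unset Printing Implicit Defensive.
Import Order.TTheory GRing.Theory Num.Theory.
Local Open Scope ring_scope.

Definition C : numClosedFieldType := complex Rdefinitions.R.

(* ---------- Network ----------
   The network G = (V,E) is V = 'I_n (node v has identifier v) with a
   symmetric irreflexive adjacency relation e : rel 'I_n.                  *)

(* ---------- Quantum registers ----------
   A T-round quantum protocol uses:
   - a private memory register  inl v  for every node v (initially |0>),
   - a message register  inr (t, v, w)  carrying the quantum message sent by
     v to w in round t (t < T), used only when e v w.
   Register r has dimension  dim r + 1  (arbitrary, chosen by the protocol).*)
Definition reg (n T : nat) : finType := ('I_n + ('I_T * 'I_n * 'I_n))%type.

(* computational basis of the global Hilbert space *)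
Definition basis (n T : nat) (dim : reg n T -> nat) : finType :=
  {dffun forall r : reg n T, 'I_(dim r).+1}.

Definition op n T (dim : reg n T -> nat) := basis dim -> basis dim -> C.

Section Ops.
Variables (n T : nat) (dim : reg n T -> nat).
Local Notation B := (basis dim).
Local Notation Op := (op dim).

Definition mulop (A B' : Op) : Op := fun a c => \sum_(b : B) A a b * B' b c.
Definition adjop (A : Op) : Op := fun a b => (A b a)^*.
Definition idop : Op := fun a b => (a == b)%:R.
Definition trace (A : Op) : C := \sum_(a : B) A a a.

Definition agree (S : {set reg n T}) (a b : B) := forall r, r \in S -> a r = b r.

(* L only depends on the S-components of its indices: L is an operator on
   the subsystem S *)
Definition onS (S : {set reg n T}) (L : Op) :=
  forall a b a' b', agree S a a' -> agree S b b' -> L a b = L a' b'.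

(* L (acting on S) tensored with the identity on the other registers *)
Definition lift (S : {set reg n T}) (L : Op) : Op :=
  fun a b => if [forall r in ~: S, a r == b r] then L a b else 0.

Definition psd (A : Op) :=
  forall psi : B -> C, 0 <= \sum_(a : B) \sum_(b : B) (psi a)^* * A a b * psi b.

Definition chan (S : {set reg n T}) (ks : seq Op) (rho : Op) : Op :=
  fun a b => \sum_(K <- ks) mulop (mulop (lift S K) rho) (adjop (lift S K)) a b.

(* initial global state |0...0><0...0| : no shared entanglement *)
Definition zero_basis : B := [ffun r => ord0].
Definition rho0 : Op := fun a b => ((a == zero_basis) && (b == zero_basis))%:R.
End Ops.

(* Registers held by node v in computation phase t (phase t < T is round t:
   v holds its memory, the messages it received in round t-1 and the
   (empty) registers of the messages it sends in round t; phase T is the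
   final local computation/measurement). *)
Definition held n T (e : rel 'I_n) (t : nat) (v : 'I_n) : {set reg n T} :=
  [set r : reg n T | match r with
           | inl w => w == v
           | inr (t', w, u) => let t' := nat_of_ord t' in
               (((t'.+1 == t)%N && (u == v)) && e w u)
               || (((t' == t :> nat) && (w == v)) && e w u)
           end].

(* A T-round quantum LOCAL protocol with inputs/outputs in Sigma:
   in round t node v (knowing its identifier v, n, and its input s) applies a
   channel given by Kraus operators on the registers it holds; at the end it
   performs a POVM (outcomes in Sigma) on the registers it holds. *)
Record qprotocol (n T : nat) (Sigma : finType) := QProtocol {
  qdim : reg n T -> nat;
  qkraus : 'I_T -> 'I_n -> Sigma -> seq (op qdim);
  qpovm : 'I_n -> Sigma -> Sigma -> op qdim }.
Arguments qdim {n T Sigma} q _.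
Arguments qkraus {n T Sigma} q _ _ _.
Arguments qpovm {n T Sigma} q _ _ _.

Definition qvalid n T (Sigma : finType) (e : rel 'I_n) (P : qprotocol n T Sigma) :=
  [/\ (forall (t : 'I_T) v s K, List.In K (qkraus P t v s) -> onS (held T e t v) K),
      (forall (t : 'I_T) v s,
          forall a b, \sum_(K <- qkraus P t v s)
             mulop (adjop (lift (held T e t v) K)) (lift (held T e t v) K) a b
          = @idop _ _ (qdim P) a b),
      (forall v s o, onS (held T e T v) (qpovm P v s o)),
      (forall v s o, psd (qpovm P v s o)) &
      (forall v s a b, \sum_(o : Sigma) lift (held T e T v) (qpovm P v s o) a b
                   = @idop _ _ (qdim P) a b)].

(* global state after all T rounds on input x (nodes of a round act on
   disjoint registers, so the order within a round is irrelevant) *)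
Definition qround n T (Sigma : finType) (e : rel 'I_n) (P : qprotocol n T Sigma)
    (x : {ffun 'I_n -> Sigma}) (t : 'I_T) (rho : op (qdim P)) : op (qdim P) :=
  foldl (fun r v => chan (held T e t v) (qkraus P t v (x v)) r) rho (enum 'I_n).
Arguments qround {n T Sigma} e P x t rho.

Definition qfinal n T (Sigma : finType) (e : rel 'I_n) (P : qprotocol n T Sigma)
    (x : {ffun 'I_n -> Sigma}) : op (qdim P) :=
  foldl (fun rho t => qround e P x t rho) (@rho0 _ _ (qdim P)) (enum 'I_T).
Arguments qfinal {n T Sigma} e P x.

Definition qprob n T (Sigma : finType) (e : rel 'I_n) (P : qprotocol n T Sigma)
    (x y : {ffun 'I_n -> Sigma}) : C :=
  trace (mulop (qfinal e P x)
     (foldr (fun v A => mulop (lift (held T e T v) (qpovm P v (x v) (y v))) A)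
            (@idop _ _ (qdim P)) (enum 'I_n))).

Record cprotocol (n : nat) (Sigma : Type) (M St : Type) := CProtocol {
  cinit : 'I_n -> Sigma -> St;
  csend : nat -> 'I_n -> 'I_n -> St -> M;          (* round, sender, receiver *)
  cupd  : nat -> 'I_n -> St -> ('I_n -> option M) -> St;
  cout  : 'I_n -> St -> Sigma }.

Fixpoint cstate n (Sigma M St : Type) (e : rel 'I_n) (Q : cprotocol n Sigma M St)
    (x : 'I_n -> Sigma) (t : nat) (v : 'I_n) : St :=
  match t with
  | 0 => cinit Q v (x v)
  | t'.+1 => cupd Q t' v (cstate e Q x t' v)
      (fun w => if e w v then Some (csend Q t' w v (cstate e Q x t' w)) else None)
  end.

Definition crun n (Sigma M St : Type) (e : rel 'I_n) (Q : cprotocol n Sigma M St)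
    (T : nat) (x : 'I_n -> Sigma) (v : 'I_n) : Sigma :=
  cout Q v (cstate e Q x T v).

(* In the Heisenberg picture the final POVM element of a node u is evolved
   backwards through the rounds.  In round t, a node at distance more than
   T - t from u acts on registers disjoint from the light cone of u, so its
   dual channel, being unital, fixes the evolved operator; the other nodes keep
   the operator inside the light cone of the previous round.  Hence the output
   distribution of u depends only on the inputs within distance T of u.
   Since all nodes are simultaneously correct with probability > 1/2, node u
   outputs f(x)_u with probability > 1/2, so f(x)_u is its unique likely
   output and only depends on the inputs in the T-ball around u.  A
   deterministic protocol therefore floods the inputs for T rounds and lets u
   output f(x')_u for any x' in D consistent with what it has learnt.
   Positivity of the probabilities involved comes from writing states and POVM
   elements as Gram kernels, g g^* summed over finitely many vectors g. *)

From Pilot Require Import Defs.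
From HB Require Import structures.
From mathcomp Require Import all_boot all_order all_algebra.
From mathcomp Require Import complex.
From Stdlib Require Import FunctionalExtensionality.
From mathcomp Require Import zify ring.
Import Order.TTheory GRing.Theory Num.Theory.
Set Implicit Arguments. Unset Strict Implicit. Unset Printing Implicit Defensive.
Local Open Scope ring_scope.

Lemma sum_delta (R : pzSemiRingType) (I : finType) (F : I -> R) a :
  \sum_x (x == a)%:R * F x = F a.
Proof.
rewrite (bigD1 a) //= eqxx mul1r big1 ?addr0 // => x /negbTE ->; exact: mul0r.
Qed.

(** * Gram kernels *)

Section GramKernels.
Variables (R : numClosedFieldType) (I : finType).
Implicit Types (A M : I -> I -> R) (psi : I -> R).

Definition gram A :=
  exists s : seq (I -> R), forall a b, A a b = \sum_(g <- s) g a * (g b)^*.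

Definition qform A psi := \sum_a \sum_b (psi a)^* * A a b * psi b.

Lemma gram_mul A M : gram A -> gram M -> gram (fun a b => A a b * M a b).
Proof.
move=> [s eA] [s' eM]; exists [seq (fun a => g a * h a) | g <- s, h <- s'] => a b.
rewrite big_allpairs_dep eA eM big_distrl; apply: eq_bigr => g _.
rewrite big_distrr; apply: eq_bigr => h _.
by rewrite rmorphM mulrACA.
Qed.

Lemma gram_prod J (r : seq J) (F : J -> I -> I -> R) :
  (forall j, gram (F j)) -> gram (fun a b => \prod_(j <- r) F j a b).
Proof.
move=> gF; elim: r => [|j r IHr].
  by exists [:: fun _ => 1] => a b; rewrite big_nil big_seq1 conjC1 mulr1.
by have [s eF] := gram_mul (gF j) IHr; exists s => a b; rewrite big_cons eF.
Qed.

Lemma gram_eq (J : finType) (pi : I -> J) : gram (fun a b => (pi a == pi b)%:R).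
Proof.
exists [seq (fun a => (pi a == z)%:R) | z <- enum J] => a b.
rewrite big_map big_enum (bigD1 (pi a)) //= eqxx mul1r conjC_nat eq_sym.
rewrite big1 ?addr0 // => z /negbTE; rewrite eq_sym => ->; exact: mul0r.
Qed.

Lemma gram_trace_ge0 A M : gram A -> gram M -> 0 <= \sum_a \sum_b A a b * M b a.
Proof.
move=> [s eA] [s' eM].
have -> : \sum_a \sum_b A a b * M b a =
    \sum_(g <- s) \sum_(h <- s') (\sum_a g a * (h a)^*)^* * \sum_a g a * (h a)^*.
  transitivity (\sum_a \sum_b \sum_(g <- s) \sum_(h <- s')
                  (g a * (g b)^* * (h b * (h a)^*))).
    apply: eq_bigr => a _; apply: eq_bigr => b _.
    rewrite eA eM big_distrl; apply: eq_bigr => g _; exact: big_distrr.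
  rewrite exchange_big; under eq_bigr do rewrite exchange_big.
  rewrite exchange_big; apply: eq_bigr => g _.
  under eq_bigr do rewrite exchange_big.
  rewrite exchange_big; apply: eq_bigr => h _.
  rewrite rmorph_sum big_distrl; apply: eq_bigr => a _.
  rewrite big_distrr; apply: eq_bigr => b _.
  rewrite rmorphM /= conjCK; ring.
apply: sumr_ge0 => g _; apply: sumr_ge0 => h _; rewrite mulrC; exact: mul_conjC_ge0.
Qed.

Lemma qform_pair A a b al be :
  qform A (fun x => (x == a)%:R * al + (x == b)%:R * be) =
  al^* * al * A a a + al^* * be * A a b + be^* * al * A b a + be^* * be * A b b.
Proof.
have delta2 c d (z w : R) :
    \sum_x \sum_y (x == c)%:R * z * A x y * ((y == d)%:R * w) = z * A c d * w.
  transitivity (\sum_x (x == c)%:R * \sum_y (y == d)%:R * (z * A x y * w)).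
    apply: eq_bigr => x _; rewrite big_distrr; apply: eq_bigr => y _ /=; ring.
  by under eq_bigr do rewrite sum_delta; rewrite sum_delta.
rewrite /qform.
under eq_bigr => x _ do under eq_bigr => y _ do
  rewrite rmorphD !rmorphM /= !conjC_nat mulrDl !mulrDr !mulrDl.
under eq_bigr do rewrite !big_split /=.
by rewrite !big_split /= !delta2; ring.
Qed.

(* Polarization: the form is real at [delta_c], [delta_a + delta_b] and
   [delta_a + i delta_b]. *)
Lemma psd_hermitian A :
  (forall psi, 0 <= qform A psi) -> forall a b, A a b = (A b a)^*.
Proof.
move=> psdA a b.
have realQ psi : (qform A psi)^* = qform A psi by apply/geC0_conj/psdA.
have eq_of_sub (x y u v : R) : x = y -> u - v = x - y -> u = v.
  by move=> ->; rewrite subrr => /subr0_eq.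
have realA c : (A c c)^* = A c c.
  have := realQ (fun x => (x == c)%:R * 1 + (x == c)%:R * 0).
  rewrite qform_pair !rmorphD !rmorphM /= conjC1 conjC0 ?conjCK => h.
  by apply: (eq_of_sub _ _ _ _ h); ring.
have E1 : (A a b)^* + (A b a)^* = A a b + A b a.
  have := realQ (fun x => (x == a)%:R * 1 + (x == b)%:R * 1).
  rewrite qform_pair !rmorphD !rmorphM /= conjC1 ?conjCK !realA => h.
  by apply: (eq_of_sub _ _ _ _ h); ring.
have E2 : - 'i * (A a b)^* + 'i * (A b a)^* = 'i * A a b - 'i * A b a.
  have := realQ (fun x => (x == a)%:R * 1 + (x == b)%:R * 'i).
  rewrite qform_pair !rmorphD !rmorphM /= conjC1 ?conjCK !realA conjCi => h.
  by apply: (eq_of_sub _ _ _ _ h); ring.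
have : (A a b - (A b a)^*) * (2%:R * 'i) =
    ('i * (A a b + A b a) + ('i * A a b - 'i * A b a)) -
    ('i * ((A a b)^* + (A b a)^*) + (- 'i * (A a b)^* + 'i * (A b a)^*)) by ring.
rewrite E1 E2 subrr => /eqP.
rewrite mulf_eq0 mulf_eq0 pnatr_eq0 (negbTE (neq0Ci _)) /= orbF subr_eq0.
by move/eqP.
Qed.

(* The spectral theorem writes A = P^* diag(d) P with d >= 0; the rows of P
   scaled by sqrt(d) give the Gram vectors. *)
Lemma psd_gram A : (forall psi, 0 <= qform A psi) -> gram A.
Proof.
move=> psdA.
pose M : 'M[R]_#|I| := \matrix_(i, j) A (enum_val i) (enum_val j).
have Mnormal : M \is normalmx.
  have Mherm : (M ^t*)%sesqui = M.
    by apply/matrixP => i j; rewrite !mxE -psd_hermitian.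
  by apply/normalmxP; rewrite Mherm.
have /orthomx_spectralP ME := Mnormal.
have /unitarymxP PU := spectral_unitarymx M.
rewrite invmx_unitary ?spectral_unitarymx // in ME.
set P := spectralmx M in ME PU; set d := spectral_diag M in ME.
have PMP : P *m M *m (P ^t*)%sesqui = diag_mx d.
  by rewrite ME !mulmxA PU mul1mx -mulmxA PU mulmx1.
have bij := onW_bij predT (@enum_val_bij I).
have d_ge0 l : 0 <= d 0 l.
  have := psdA (fun a => (P l (enum_rank a))^*).
  suff -> : qform A (fun a => (P l (enum_rank a))^*) = (P *m M *m (P ^t*)%sesqui) l l.
    by rewrite PMP mxE eqxx mulr1n.
  rewrite /qform exchange_big mxE (reindex _ bij); apply: eq_bigr => i _.
  rewrite mxE big_distrl (reindex _ bij); apply: eq_bigr => j _.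
  by rewrite !mxE !enum_valK conjCK.
exists [seq (fun a => sqrtC (d 0 l) * (P l (enum_rank a))^*) | l <- enum 'I_#|I|].
move=> a b; rewrite big_map big_enum /=.
have -> : A a b = M (enum_rank a) (enum_rank b) by rewrite mxE !enum_rankK.
rewrite ME mxE; apply: eq_bigr => l _.
rewrite mul_mx_diag !mxE rmorphM /= conjCK.
have sqrt_real : (sqrtC (d 0 l))^* = sqrtC (d 0 l).
  by apply: geC0_conj; rewrite sqrtC_ge0 d_ge0.
rewrite sqrt_real -[d 0 l in LHS]sqrtCK expr2; ring.
Qed.

End GramKernels.

Section Operators.
Variables (n T : nat) (dim : reg n T -> nat).
Local Notation B := (basis dim).
Local Notation Op := (op dim).
Local Notation id1 := (@idop n T dim).
Local Notation lift := Defs.lift.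
Implicit Types (R S : {set reg n T}) (K L M X Y rho : Op).

Definition sumop I (r : seq I) (F : I -> Op) : Op := fun a b => \sum_(i <- r) F i a b.

Lemma eq_sumop I (r : seq I) (F G : I -> Op) :
  (forall i, List.In i r -> F i = G i) -> sumop r F = sumop r G.
Proof.
move=> eqFG; apply: functional_extensionality => a; apply: functional_extensionality => b.
elim: r eqFG => [|i r IHr] eqFG; first by rewrite /sumop !big_nil.
rewrite /sumop !big_cons (eqFG i (or_introl erefl)); congr (_ + _).
by apply: IHr => j jr; apply: eqFG; right.
Qed.

Lemma mulopA X Y Z : mulop (mulop X Y) Z = mulop X (mulop Y Z).
Proof.
apply: functional_extensionality => a; apply: functional_extensionality => d.
rewrite /mulop; under eq_bigr do rewrite big_distrl /=.
rewrite exchange_big /=; apply: eq_bigr => c _; rewrite big_distrr /=.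
by apply: eq_bigr => b _; rewrite mulrA.
Qed.

Lemma mulop_sumr I (r : seq I) (F : I -> Op) X :
  mulop X (sumop r F) = sumop r (fun i => mulop X (F i)).
Proof.
apply: functional_extensionality => a; apply: functional_extensionality => d.
by rewrite /mulop /sumop; under eq_bigr do rewrite big_distrr; rewrite exchange_big.
Qed.

Lemma mulop_suml I (r : seq I) (F : I -> Op) X :
  mulop (sumop r F) X = sumop r (fun i => mulop (F i) X).
Proof.
apply: functional_extensionality => a; apply: functional_extensionality => d.
by rewrite /mulop /sumop; under eq_bigr do rewrite big_distrl; rewrite exchange_big.
Qed.

Lemma mulop1 X : mulop X id1 = X.
Proof.
apply: functional_extensionality => a; apply: functional_extensionality => d.
by rewrite /mulop /idop; under eq_bigr do rewrite mulrC; rewrite sum_delta.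
Qed.

Lemma mul1op X : mulop id1 X = X.
Proof.
apply: functional_extensionality => a; apply: functional_extensionality => d.
by rewrite /mulop /idop; under eq_bigr do rewrite eq_sym; rewrite sum_delta.
Qed.

Lemma trace_mulC X Y : trace (mulop X Y) = trace (mulop Y X).
Proof.
rewrite /trace /mulop exchange_big; apply: eq_bigr => a _.
by apply: eq_bigr => b _; rewrite mulrC.
Qed.

Lemma trace_sumop I (r : seq I) (F : I -> Op) :
  trace (sumop r F) = \sum_(i <- r) trace (F i).
Proof. by rewrite /trace /sumop exchange_big. Qed.

Lemma trace_mul_sumr (J : finType) (p : pred J) rho (M : J -> Op) :
  trace (mulop rho (fun a c => \sum_(j | p j) M j a c)) =
  \sum_(j | p j) trace (mulop rho (M j)).
Proof.
rewrite /trace /mulop.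
under eq_bigr do under eq_bigr do rewrite big_distrr.
by under eq_bigr do rewrite exchange_big; rewrite exchange_big.
Qed.

Lemma trace_foldl I (F G : I -> Op -> Op) (l : seq I) rho X :
  (forall i rho' Y, trace (mulop (F i rho') Y) = trace (mulop rho' (G i Y))) ->
  trace (mulop (foldl (fun rho' i => F i rho') rho l) X) =
  trace (mulop rho (foldr G X l)).
Proof. by move=> FG; elim: l rho => [|i l IHl] rho //=; rewrite IHl FG. Qed.

Definition dual_chan S (ks : seq Op) X : Op :=
  sumop ks (fun K => mulop (mulop (adjop (lift S K)) X) (lift S K)).

Lemma trace_chan S ks rho X :
  trace (mulop (chan S ks rho) X) = trace (mulop rho (dual_chan S ks X)).
Proof.
rewrite [chan _ _ _]/(sumop _ _) mulop_suml trace_sumop mulop_sumr trace_sumop.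
by apply: eq_bigr => K _; rewrite !mulopA trace_mulC !mulopA.
Qed.

Definition eq_on S (a b : B) := [forall r in S, a r == b r].

Definition patch S (c a : B) : B :=
  @finfun _ (fun r => 'I_(dim r).+1) (fun r => if r \in S then c r else a r).

Lemma patchE S c a r : patch S c a r = if r \in S then c r else a r.
Proof. by rewrite ffunE. Qed.

Lemma liftE S L a b : lift S L a b = (eq_on (~: S) a b)%:R * L a b.
Proof. by rewrite /Defs.lift /eq_on; case: ifP; rewrite ?mul1r ?mul0r. Qed.

Lemma adjop_lift S K : adjop (lift S K) = lift S (adjop K).
Proof.
apply: functional_extensionality => a; apply: functional_extensionality => c.
have eq_onC : eq_on (~: S) c a = eq_on (~: S) a c.
  by apply: eq_forallb => r; rewrite eq_sym.
by rewrite /adjop !liftE rmorphM /= conjC_nat eq_onC.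
Qed.

Lemma onS_adjop S K : onS S K -> onS S (adjop K).
Proof. by move=> onK a b a' b' ea eb; rewrite /adjop (onK b a b' a'). Qed.

(* The product only sees the intermediate index [patch S c a]. *)
Lemma lift_mul S R K L : onS S K -> onS R L -> [disjoint S & R] ->
  mulop (lift S K) (lift R L) = lift (S :|: R) (fun a c => K a c * L a c).
Proof.
move=> onK onL dSR.
apply: functional_extensionality => a; apply: functional_extensionality => c.
rewrite /mulop (bigD1 (patch S c a)) //.
rewrite big1_seq /= ?addr0 => [|b /andP[/eqP nb _]]; last first.
  rewrite !liftE; case: (eq_on _ a b) / forall_inP => [aSb|]; last by rewrite !mul0r.
  case: (eq_on _ b c) / forall_inP => [bRc|]; last by rewrite mul0r !mulr0.
  case: nb; apply/ffunP => r; rewrite patchE; case: ifP => rS.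
    by apply/eqP/bRc; rewrite inE (disjointFr dSR rS).
  by apply/esym/eqP/aSb; rewrite inE rS.
rewrite !liftE.
have -> : eq_on (~: S) a (patch S c a).
  by apply/forall_inP => r; rewrite inE patchE => /negbTE ->.
have -> : K a (patch S c a) = K a c by apply: onK => // r rS; rewrite patchE rS.
have -> : L (patch S c a) c = L a c.
  by apply: onL => // r rR; rewrite patchE (disjointFl dSR rR).
have -> : eq_on (~: R) (patch S c a) c = eq_on (~: (S :|: R)) a c.
  apply/forall_inP/forall_inP => eqac r; rewrite !inE ?negb_or.
    by case/andP=> rS rR; move: (eqac r); rewrite inE rR patchE (negbTE rS); apply.
  move=> rR; rewrite patchE; case: ifP => rS //.
  by apply: eqac; rewrite !inE rS.
by rewrite mul1r mulrCA mulrA.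
Qed.

Lemma lift_comm S R K L : onS S K -> onS R L -> [disjoint S & R] ->
  mulop (lift S K) (lift R L) = mulop (lift R L) (lift S K).
Proof.
move=> onK onL dSR; rewrite lift_mul // lift_mul 1?disjoint_sym // setUC.
by congr lift; do 2 apply: functional_extensionality => ?; rewrite mulrC.
Qed.

(* "[X] acts on [R] only", encoded by commutation with everything acting
   outside [R]. *)
Definition supported R X :=
  forall S M, [disjoint S & R] -> onS S M -> mulop X (lift S M) = mulop (lift S M) X.

Lemma supported_sub R R' X : R \subset R' -> supported R X -> supported R' X.
Proof. by move=> sRR' suppX S M dSR'; apply/suppX/(disjointWr sRR'). Qed.

Lemma supported_lift S K : onS S K -> supported S (lift S K).
Proof. by move=> onK S' M dS'S onM; apply: lift_comm; rewrite 1?disjoint_sym. Qed.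

(* Each Kraus operator commutes past [X], and the Kraus operators sum to the
   identity. *)
Lemma dual_chan_id S ks R X :
  (forall a b, sumop ks (fun K => mulop (adjop (lift S K)) (lift S K)) a b = id1 a b) ->
  (forall K, List.In K ks -> onS S K) ->
  supported R X -> [disjoint S & R] -> dual_chan S ks X = X.
Proof.
move=> unital onks suppX dSR.
rewrite /dual_chan (@eq_sumop _ _ _ (fun K => mulop (mulop (adjop (lift S K)) (lift S K)) X)).
  rewrite -mulop_suml (_ : sumop _ _ = id1) ?mul1op //.
  by do 2 apply: functional_extensionality => ?; apply: unital.
by move=> K Kks; rewrite !mulopA (suppX S K dSR (onks K Kks)).
Qed.

Lemma dual_chan_supported S ks R X :
  (forall K, List.In K ks -> onS S K) ->
  supported R X -> S \subset R -> supported R (dual_chan S ks X).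
Proof.
move=> onks suppX sSR S' M dS'R onM.
rewrite /dual_chan mulop_suml mulop_sumr; apply: eq_sumop => K Kks.
have dSS' : [disjoint S & S'] by rewrite disjoint_sym (disjointWr sSR).
have onK := onks K Kks.
have commK := lift_comm onK onM dSS'.
have commK' := lift_comm (onS_adjop onK) onM dSS'; rewrite -adjop_lift in commK'.
rewrite !mulopA commK -(mulopA X) (suppX S' M dS'R onM) mulopA.
by rewrite -(mulopA (adjop _)) commK' !mulopA.
Qed.

End Operators.

(** * Balls and light cones *)

Local Close Scope ring_scope.

Fixpoint ball n (e : rel 'I_n) (s : nat) (u : 'I_n) : {set 'I_n} :=
  if s is s'.+1 then ball e s' u :|: \bigcup_(y | e y u) ball e s' y else [set u].

Section Balls.
Variables (n : nat) (e : rel 'I_n).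

Lemma ball_center s u : u \in ball e s u.
Proof. by elim: s => [|s IHs] /=; rewrite ?inE ?eqxx // IHs. Qed.

Lemma ball_mono s s' u : s <= s' -> ball e s u \subset ball e s' u.
Proof.
move=> /subnK <-; elim: (s' - s) => [|k IHk] //=.
exact: subset_trans IHk (subsetUl _ _).
Qed.

Lemma ball_adj s u v w : w \in ball e s u -> e v w -> v \in ball e s.+1 u.
Proof.
elim: s u w => [|s IHs] u w /=.
  move=> /set1P -> evu; rewrite inE; apply/orP; right.
  by apply/bigcupP; exists v; rewrite ?inE.
rewrite inE => /orP[wu | /bigcupP[y eyu wy]] evw; rewrite inE.
  by rewrite (IHs u w wu evw).
by apply/orP; right; apply/bigcupP; exists y => //; apply: IHs wy evw.
Qed.

End Balls.

Section LightCone.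
Variables (n T : nat) (e : rel 'I_n) (u : 'I_n).

(* Registers that may influence the final measurement at [u], as seen just
   before phase [s]: memories within distance [T - s] of [u], messages of the
   previous round received there, and all messages of later rounds. *)
Definition cone (s : nat) : {set reg n T} :=
  [set r : reg n T | match r with
     | inl w => w \in ball e (T - s) u
     | inr (t', w, z) => (s <= t'.+1) && ((t'.+1 == s) ==> (z \in ball e (T - s) u))
     end].

Definition midcone (t : nat) : {set reg n T} :=
  cone t.+1 :|: \bigcup_(v in ball e (T - t) u) held T e t v.

Lemma disjoint_held t v w : v != w -> [disjoint held T e t v & held T e t w].
Proof.
move=> /negbTE vw; rewrite -setI_eq0; apply/eqP/setP => -[w' | [[t' w'] z]].
  by rewrite !inE; apply/andP => -[/eqP -> /eqP]; apply/eqP; rewrite vw.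
rewrite !inE; apply/negP => /andP[].
case/orP => /andP[/andP[/eqP h1 /eqP h2] _]; case/orP => /andP[/andP[/eqP h1' /eqP h2'] _].
- by move: vw; rewrite -h2 -h2' eqxx.
- by move: h1 h1'; lia.
- by move: h1 h1'; lia.
- by move: vw; rewrite -h2 -h2' eqxx.
Qed.

Lemma cone_succ_sub t : cone t.+1 \subset cone t.
Proof.
apply/subsetP => -[w | [[t' w] z]]; rewrite !inE.
  by apply: (subsetP (ball_mono _ _ _)); apply: leq_sub2l.
by case/andP => lt_t_t' _; rewrite (ltnW lt_t_t') gtn_eqF.
Qed.

Lemma held_sub_cone t v : v \in ball e (T - t) u -> held T e t v \subset cone t.
Proof.
move=> vu; apply/subsetP => -[w | [[t' w] z]]; rewrite !inE; first by move/eqP ->.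
case/orP => /andP[/andP[/eqP h1 /eqP h2] _]; first by rewrite h1 h2 leqnn eqxx vu.
by rewrite h1 leqnSn eqn_leq ltnn.
Qed.

(* A node outside the ball cannot touch the cone of the next phase: what it
   sends in round [t] lands outside [ball e (T - t.+1) u]. *)
Lemma disjoint_held_cone t v : t < T -> v \notin ball e (T - t) u ->
  [disjoint held T e t v & cone t.+1].
Proof.
move=> ltT vNu; rewrite -setI_eq0; apply/eqP/setP => -[w | [[t' w] z]]; rewrite !inE.
  apply/andP => -[/eqP -> vu]; move/negP: vNu; apply.
  by apply: subsetP vu; apply/ball_mono/leq_sub2l.
apply/negP => /andP[/orP[]] /andP[/andP[/eqP h1 /eqP h2] ezv].
  by rewrite -h1 ltnn.
rewrite h1 eqxx ltnSn /= => zu; move/negP: vNu; apply.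
by rewrite -h2 -subnSK //; apply: ball_adj zu ezv.
Qed.

Lemma held_final_sub_cone : held T e T u \subset cone T.
Proof.
apply/subsetP => -[w | [[t' w] z]]; rewrite !inE subnn.
  by move/eqP ->; rewrite inE.
case/orP => /andP[/andP[/eqP h1 /eqP h2] _].
  by rewrite h1 leqnn eqxx h2 inE eqxx.
by have := ltn_ord t'; rewrite h1 ltnn.
Qed.

Lemma disjoint_held_midcone t v : t < T -> v \notin ball e (T - t) u ->
  [disjoint held T e t v & midcone t].
Proof.
move=> ltT vNu; rewrite disjoints_subset setCU subsetI -!disjoints_subset.
rewrite disjoint_held_cone //=; apply: bigcup_disjoint => w wu.
by apply: disjoint_held; apply: contraNneq vNu => ->.
Qed.

Lemma held_sub_midcone t v : v \in ball e (T - t) u -> held T e t v \subset midcone t.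
Proof. by move=> vu; rewrite subsetU // (bigcup_sup _ vu) orbT. Qed.

Lemma midcone_sub_cone t : midcone t \subset cone t.
Proof. by rewrite subUset cone_succ_sub; apply/bigcupsP => v; apply: held_sub_cone. Qed.

End LightCone.

(** * No signalling *)

Section NoSignalling.
Variables (n T : nat) (e : rel 'I_n) (Sigma : finType) (P : qprotocol n T Sigma).
Variable u : 'I_n.
Local Notation Op := (op (qdim P)).
Local Notation lift := Defs.lift.
Local Notation input := {ffun 'I_n -> Sigma}.

Hypothesis kraus_on : forall (t : 'I_T) v s K,
  List.In K (qkraus P t v s) -> onS (held T e t v) K.
Hypothesis kraus_unital : forall (t : 'I_T) v s a b,
  sumop (qkraus P t v s)
    (fun K => mulop (adjop (lift (held T e t v) K)) (lift (held T e t v) K)) a b =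
  @idop _ _ (qdim P) a b.

Definition dual_round (x : input) (t : 'I_T) (X : Op) : Op :=
  foldr (fun v Y => dual_chan (held T e t v) (qkraus P t v (x v)) Y) X (enum 'I_n).

Lemma trace_qfinal x X :
  trace (mulop (qfinal e P x) X) =
  trace (mulop (@rho0 _ _ (qdim P)) (foldr (dual_round x) X (enum 'I_T))).
Proof.
apply: trace_foldl => t rho Y; apply: trace_foldl => v rho' Y'; exact: trace_chan.
Qed.

(* Nodes outside the ball leave [X] unchanged, nodes inside keep it within
   [midcone t]. *)
Lemma dual_round_cone (x x' : input) (t : 'I_T) X :
  {in ball e (T - t) u, x =1 x'} -> supported (cone T e u t.+1) X ->
  dual_round x t X = dual_round x' t X /\ supported (cone T e u t) (dual_round x t X).
Proof.
move=> eq_xx' suppX.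
suff /(_ (enum 'I_n)) [eq_x supp] : forall l : seq 'I_n,
    foldr (fun v Y => dual_chan (held T e t v) (qkraus P t v (x v)) Y) X l =
    foldr (fun v Y => dual_chan (held T e t v) (qkraus P t v (x' v)) Y) X l /\
    supported (midcone T e u t)
      (foldr (fun v Y => dual_chan (held T e t v) (qkraus P t v (x v)) Y) X l).
  by split=> //; apply: supported_sub supp; apply: midcone_sub_cone.
elim=> [|v l [eq_l supp_l]] /=; first by split=> //; apply: supported_sub suppX; apply: subsetUl.
rewrite -eq_l; have [vu | vNu] := boolP (v \in ball e (T - t) u).
  rewrite -eq_xx' //; split=> //; apply: dual_chan_supported => //.
    exact: kraus_on.
  exact: held_sub_midcone.
have dv := disjoint_held_midcone (ltn_ord t) vNu.
by rewrite !(dual_chan_id (kraus_unital _ _ _) (@kraus_on _ _ _) supp_l dv).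
Qed.

Lemma dual_rounds_cone (x x' : input) X :
  {in ball e T u, x =1 x'} -> supported (cone T e u T) X ->
  forall (l : seq 'I_T) s, s <= T -> map val l = iota s (T - s) ->
  foldr (dual_round x) X l = foldr (dual_round x') X l /\
  supported (cone T e u s) (foldr (dual_round x) X l).
Proof.
move=> eq_xx' suppX; elim=> [|t l IHl] s leT /=.
  move/(congr1 size); rewrite size_iota => /esym/eqP; rewrite subn_eq0 => geT.
  by rewrite (@anti_leq s T) ?leT.
case def_Ts: (T - s) => [|k] //= [def_t def_l].
have ltT : s < T by rewrite -def_t ltn_ord.
have [eq_l supp_l] : foldr (dual_round x) X l = foldr (dual_round x') X l /\
                     supported (cone T e u s.+1) (foldr (dual_round x) X l).
  by apply: IHl => //; rewrite def_l subnS def_Ts.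
have eq_xx't : {in ball e (T - t) u, x =1 x'}.
  by move=> v vu; apply: eq_xx'; apply: subsetP vu; apply/ball_mono/leq_subr.
rewrite -def_t in supp_l *.
have [eq_t supp_t] := dual_round_cone eq_xx't supp_l.
by split; rewrite // eq_t eq_l.
Qed.

Definition marginal (x : input) (o : Sigma) : C :=
  trace (mulop (qfinal e P x) (lift (held T e T u) (qpovm P u (x u) o))).

Lemma marginal_local (x x' : input) o :
  (forall s o, onS (held T e T u) (qpovm P u s o)) ->
  {in ball e T u, x =1 x'} -> marginal x o = marginal x' o.
Proof.
move=> povm_on eq_xx'; rewrite /marginal !trace_qfinal -(eq_xx' u) ?ball_center //.
have suppE : supported (cone T e u T) (lift (held T e T u) (qpovm P u (x u) o)).
  exact: supported_sub (held_final_sub_cone T e u) (supported_lift (povm_on _ _)).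
have enumT : map val (enum 'I_T) = iota 0 (T - 0) by rewrite val_enum_ord subn0.
by have [-> _] := dual_rounds_cone eq_xx' suppE (leq0n T) enumT.
Qed.

End NoSignalling.

Local Open Scope ring_scope.

Lemma sum_ffun_fix (R : comNzRingType) (J K : finType) (F : J -> K -> R) u o :
  \sum_(y : {ffun J -> K} | y u == o) \prod_v F v (y v) =
  F u o * \prod_(v | v != u) \sum_s F v s.
Proof.
pose G v s := if v == u then (s == o)%:R * F v s else F v s.
have -> : \sum_(y : {ffun J -> K} | y u == o) \prod_v F v (y v) = \prod_v \sum_s G v s.
  rewrite bigA_distr_bigA big_mkcond; apply: eq_bigr => y _.
  rewrite [RHS](bigD1 u) //= {1}/G eqxx.
  case: (y u =P o) => [yu|_]; first rewrite mulr1n mul1r (bigD1 u) //= yu.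
    by congr (_ * _); apply: eq_bigr => v /negbTE; rewrite /G => ->.
  by rewrite mulr0n !mul0r.
rewrite (bigD1 u) //= {1}/G eqxx sum_delta; congr (_ * _).
by apply: eq_bigr => v /negbTE; rewrite /G => ->.
Qed.

Section Products.
Variables (n T : nat) (dim : reg n T -> nat).
Local Notation B := (basis dim).
Local Notation Op := (op dim).
Local Notation id1 := (@idop n T dim).
Local Notation lift := Defs.lift.
Implicit Types (S U : {set reg n T}) (K L rho : Op).

Lemma patch_eq_on S (z a c : B) : (patch S z a == patch S z c) = eq_on (~: S) a c.
Proof.
apply/eqP/forall_inP => [eq_ac r | eq_ac]; rewrite ?inE.
  by move/negbTE => rS; move/ffunP: eq_ac => /(_ r); rewrite !patchE rS => ->.
by apply/ffunP => r; rewrite !patchE; case: ifP => // /negbT rS; apply/eqP/eq_ac; rewrite inE.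
Qed.

Lemma eq_patch S (a c : B) : (a == patch S c a) = eq_on S a c.
Proof.
apply/eqP/forall_inP => [-> r rS | eq_ac]; first by rewrite patchE rS.
by apply/ffunP => r; rewrite patchE; case: ifP => // rS; apply/eqP/eq_ac.
Qed.

Lemma lift_set0 : id1 = lift set0 (fun _ _ => 1).
Proof.
apply: functional_extensionality => a; apply: functional_extensionality => c.
suff eq_onT : eq_on (~: set0) a c = (a == c) by rewrite liftE mulr1 eq_onT.
by apply/forall_inP/eqP => [eq_ac | -> //]; apply/ffunP => r; apply/eqP/eq_ac; rewrite !inE.
Qed.

Lemma onS_sub S S' K : S \subset S' -> onS S K -> onS S' K.
Proof.
by move=> /subsetP sSS' onK a b a' b' eq_a eq_b; apply: onK => r /sSS' rS'; auto.
Qed.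

Lemma onS_prod J (l : seq J) (S : J -> {set reg n T}) (F : J -> Op) :
  (forall j, onS (S j) (F j)) ->
  onS (\bigcup_(j <- l) S j) (fun a c => \prod_(j <- l) F j a c).
Proof.
move=> onF; elim: l => [|j l IHl] a b a' b' eq_a eq_b; first by rewrite !big_nil.
rewrite !big_cons (onS_sub _ (onF j) eq_a eq_b) ?big_cons ?subsetUl //.
by rewrite (onS_sub _ IHl eq_a eq_b) // big_cons subsetUr.
Qed.

Lemma foldr_mul_lift (J : finType) (l : seq J) (S : J -> {set reg n T}) (F : J -> Op) :
  uniq l -> (forall i j, i != j -> [disjoint S i & S j]) ->
  (forall j, onS (S j) (F j)) ->
  foldr (fun j A => mulop (lift (S j) (F j)) A) id1 l =
  lift (\bigcup_(j <- l) S j) (fun a c => \prod_(j <- l) F j a c).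
Proof.
move=> + dS onF; elim: l => [_|j l IHl /= /andP[jNl uniq_l]].
  rewrite lift_set0 big_nil; congr lift.
  by do 2 apply: functional_extensionality => ?; rewrite big_nil.
have dj : [disjoint S j & \bigcup_(i <- l) S i].
  rewrite bigcup_seq; apply: bigcup_disjoint => i il; apply: dS.
  by apply: contraNneq jNl => ->.
rewrite IHl // lift_mul //; last exact: onS_prod.
rewrite big_cons; congr lift.
by do 2 apply: functional_extensionality => ?; rewrite big_cons.
Qed.

Lemma sum_povm (Sigma : finType) S (E : Sigma -> Op) a c :
  (forall s, onS S (E s)) -> (forall a c, \sum_s lift S (E s) a c = id1 a c) ->
  \sum_s E s a c = (eq_on S a c)%:R.
Proof.
move=> onE sumE; rewrite -eq_patch -[RHS](sumE a (patch S c a)).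
have offS : eq_on (~: S) a (patch S c a).
  by apply/forall_inP => r; rewrite inE patchE => /negbTE ->.
apply: eq_bigr => s _; rewrite liftE offS mul1r.
by apply: onE => r rS //; rewrite patchE rS.
Qed.

Lemma eq_on_cover (J : finType) (S : J -> {set reg n T}) u (a c : B) :
  (forall i j, i != j -> [disjoint S i & S j]) ->
  eq_on (~: \bigcup_j S j) a c && [forall (v | v != u), eq_on (S v) a c] =
  eq_on (~: S u) a c.
Proof.
move=> dS; apply/andP/forall_inP => [[/forall_inP offU /forall_inP onSv] r | eq_off].
  rewrite inE => rNu; have [/bigcupP[v _ rv] | rNU] := boolP (r \in \bigcup_j S j).
    have vu : v != u by apply: contraNneq rNu => <-.
    by move/forall_inP: (onSv v vu); apply.
  by apply: offU; rewrite inE.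
split; apply/forall_inP.
  move=> r; rewrite inE => rNU; apply: eq_off; rewrite inE.
  by apply: contra rNU => ru; apply/bigcupP; exists u.
move=> v vu; apply/forall_inP => r rv; apply: eq_off.
by rewrite inE (disjointFr (dS v u vu) rv).
Qed.

Lemma sum_joint_povm (Sigma : finType) (S : 'I_n -> {set reg n T})
    (E : 'I_n -> Sigma -> Op) u o a c :
  (forall i j, i != j -> [disjoint S i & S j]) -> (forall v s, onS (S v) (E v s)) ->
  (forall v a c, \sum_s lift (S v) (E v s) a c = id1 a c) ->
  \sum_(y : {ffun 'I_n -> Sigma} | y u == o)
     foldr (fun v A => mulop (lift (S v) (E v (y v))) A) id1 (enum 'I_n) a c =
  lift (S u) (E u o) a c.
Proof.
move=> dS onE sumE.
have cupE : \bigcup_(v <- enum 'I_n) S v = \bigcup_v S v by rewrite big_enum.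
have prodE y : \prod_(v <- enum 'I_n) E v (y v) a c = \prod_v E v (y v) a c.
  by rewrite big_enum.
under eq_bigr do rewrite foldr_mul_lift ?enum_uniq // liftE cupE prodE.
rewrite -big_distrr /= (sum_ffun_fix (fun v s => E v s a c)).
rewrite (eq_bigr (fun v => (eq_on (S v) a c)%:R)) => [|v _]; last exact: sum_povm.
have -> : \prod_(v | v != u) (eq_on (S v) a c)%:R =
          [forall (v | v != u), eq_on (S v) a c]%:R :> C.
  have [/forall_inP onSv | /forall_inPn[v vu /negbTE nv]] :=
    boolP [forall (v | v != u), eq_on (S v) a c].
    by rewrite big1 // => v /onSv ->.
  by rewrite (bigD1 v) //= nv mul0r.
by rewrite mulrCA -natrM mulnb eq_on_cover // liftE mulrC.
Qed.

End Products.

Section States.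
Variables (n T : nat) (dim : reg n T -> nat).
Local Notation B := (basis dim).
Local Notation Op := (op dim).
Local Notation lift := Defs.lift.
Local Notation zero := (@zero_basis n T dim).
Implicit Types (S U : {set reg n T}) (L rho : Op).

Lemma gram_lift U L : gram L -> gram (lift U L).
Proof.
have -> : lift U L = fun a c => (patch U zero a == patch U zero c)%:R * L a c.
  apply: functional_extensionality => a; apply: functional_extensionality => c.
  by rewrite liftE patch_eq_on.
exact/gram_mul/gram_eq.
Qed.

Lemma gram_rho0 : gram (@rho0 _ _ dim).
Proof.
exists [:: fun a : B => (a == zero)%:R] => a b.
by rewrite big_seq1 conjC_nat /rho0 -natrM mulnb.
Qed.

Lemma gram_chan S ks rho : gram rho -> gram (chan S ks rho).
Proof.
move=> [s eq_rho].
exists [seq (fun a => \sum_d lift S K a d * g d) | K <- ks, g <- s] => a b.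
rewrite big_allpairs_dep; apply: eq_bigr => K _; set L := lift S K.
transitivity (\sum_(g <- s) \sum_d \sum_c L a d * g d * ((L b c)^* * (g c)^*)); last first.
  apply: eq_bigr => g _; rewrite rmorph_sum big_distrl; apply: eq_bigr => d _ /=.
  by rewrite big_distrr; apply: eq_bigr => c _ /=; rewrite rmorphM.
transitivity (\sum_c \sum_d \sum_(g <- s) L a d * g d * ((L b c)^* * (g c)^*)).
  apply: eq_bigr => c _; rewrite big_distrl; apply: eq_bigr => d _ /=.
  rewrite eq_rho big_distrr big_distrl; apply: eq_bigr => g _ /=.
  by rewrite /adjop mulrA mulrAC -!mulrA.
rewrite exchange_big [RHS]exchange_big; apply: eq_bigr => d _.
by rewrite [RHS]exchange_big.
Qed.

Lemma gram_foldl I (F : I -> Op -> Op) (l : seq I) rho :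
  (forall i rho', gram rho' -> gram (F i rho')) -> gram rho ->
  gram (foldl (fun rho' i => F i rho') rho l).
Proof. by move=> gF; elim: l rho => [|i l IHl] rho //= /(gF i)/IHl. Qed.

Lemma trace_rho0 : trace (mulop (@rho0 _ _ dim) (@idop _ _ dim)) = 1.
Proof.
rewrite mulop1 /trace /rho0; under eq_bigr do rewrite andbb -[_%:R]mulr1.
exact: sum_delta.
Qed.

End States.

Section Protocol.
Variables (n : nat) (e : rel 'I_n) (Sigma : finType) (T : nat) (P : qprotocol n T Sigma).
Local Notation input := {ffun 'I_n -> Sigma}.
Local Notation id1 := (@idop _ _ (qdim P)).
Local Notation lift := Defs.lift.

Lemma gram_qfinal x : gram (qfinal e P x).
Proof.
apply: gram_foldl (gram_rho0 _) => t rho g_rho.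
by apply: gram_foldl g_rho => v rho' g_rho'; apply: gram_chan.
Qed.

Hypothesis validP : qvalid e P.

Lemma qprob_ge0 x y : 0 <= qprob e P x y.
Proof.
case: validP => _ _ povm_on povm_psd _.
rewrite /qprob (foldr_mul_lift (enum_uniq _) (@disjoint_held n T e T)); last first.
  by move=> v; apply: povm_on.
apply: gram_trace_ge0 (gram_qfinal x) _.
by apply/gram_lift/gram_prod => v; apply/psd_gram/povm_psd.
Qed.

Lemma marginal_qprob x u o :
  marginal e P u x o = \sum_(y : input | y u == o) qprob e P x y.
Proof.
case: validP => _ _ povm_on _ povm_sum.
rewrite /qprob -trace_mul_sumr /marginal; congr (trace (mulop _ _)).
apply: functional_extensionality => a; apply: functional_extensionality => c.
symmetry; apply: (sum_joint_povm (E := fun v => qpovm P v (x v))) => //.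
exact: disjoint_held.
Qed.

Lemma sum_marginal x u : \sum_o marginal e P u x o = 1.
Proof.
case: validP => kraus_on kraus_unital _ _ povm_sum.
rewrite /marginal -trace_mul_sumr.
have -> : (fun a c => \sum_o lift (held T e T u) (qpovm P u (x u) o) a c) = id1.
  by do 2 apply: functional_extensionality => ?; apply: povm_sum.
have dual_round1 t : dual_round e x t id1 = id1.
  rewrite /dual_round; elim: (enum 'I_n) => //= v l ->.
  apply: (dual_chan_id (R := set0) (kraus_unital t v (x v)) (kraus_on t v (x v))).
    by move=> S M _ _; rewrite mulop1 mul1op.
  by rewrite -setI_eq0 setI0.
rewrite trace_qfinal (_ : foldr _ _ _ = id1) ?trace_rho0 //.
by elim: (enum 'I_T) => //= t l ->.
Qed.

Lemma output_determined (D : pred input) (f : input -> input) :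
  (forall x, D x -> 1 / 2 < qprob e P x (f x)) ->
  forall x x' u, D x -> D x' -> {in ball e T u, x =1 x'} -> f x u = f x' u.
Proof.
move=> succ x x' u Dx Dx' eq_xx'.
have likely x0 : D x0 -> 1 / 2 < marginal e P u x0 (f x0 u).
  move=> Dx0; apply: lt_le_trans (succ x0 Dx0) _.
  rewrite marginal_qprob (bigD1 (f x0)) //= lerDl.
  by apply: sumr_ge0 => y _; apply: qprob_ge0.
have likely' : 1 / 2 < marginal e P u x (f x' u).
  case: validP => kraus_on kraus_unital povm_on _ _.
  by rewrite (marginal_local kraus_on kraus_unital _ (povm_on u) eq_xx'); apply: likely.
have [//|neq_f] := eqVneq (f x u) (f x' u).
have sum1 := sum_marginal x u.
rewrite (bigD1 (f x u)) // (bigD1 (f x' u)) /= 1?eq_sym // in sum1.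
have rest_ge0 : 0 <= \sum_(o | (o != f x u) && (o != f x' u)) marginal e P u x o.
  apply: sumr_ge0 => o _; rewrite marginal_qprob.
  by apply: sumr_ge0 => y _; apply: qprob_ge0.
have := ltrD (likely x Dx) (ltr_wpDr rest_ge0 likely').
by rewrite sum1 -splitr ltxx.
Qed.

End Protocol.

(** * Classical flooding *)

Section Flooding.
Variables (n : nat) (e : rel 'I_n) (Sigma : finType).
Variables (D : pred {ffun 'I_n -> Sigma}) (f : {ffun 'I_n -> Sigma} -> {ffun 'I_n -> Sigma}).

(* A node's own input, and the inputs it has learnt so far. *)
Definition flood_st := (Sigma * {ffun 'I_n -> option Sigma})%type.

Definition learn (inbox : 'I_n -> option flood_st) (w : 'I_n) : option Sigma :=
  if [pick y | if inbox y is Some m then m.2 w != None else false] is Some y then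
    if inbox y is Some m then m.2 w else None
  else None.

Definition consistent (known : {ffun 'I_n -> option Sigma}) (x : {ffun 'I_n -> Sigma}) :=
  [forall w, (known w == None) || (known w == Some (x w))].

(* The fallback [st.1] is never used on inputs in [D], since the true input is
   always consistent with what was learnt. *)
Definition flood : cprotocol n Sigma flood_st flood_st :=
  CProtocol
    (fun v s => (s, [ffun w => if w == v then Some s else None]))
    (fun _ _ _ st => st)
    (fun _ _ st inbox =>
       (st.1, [ffun w => if st.2 w is Some s then Some s else learn inbox w]))
    (fun u st => if [pick x' | D x' && consistent st.2 x'] is Some x' then f x' u else st.1).

Lemma flood_state (x : 'I_n -> Sigma) t v :
  cstate e flood x t v = (x v, [ffun w => if w \in ball e t v then Some (x w) else None]).
Proof.
elim: t v => [|t IHt] v /=.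
  by congr pair; apply/ffunP => w; rewrite !ffunE inE; case: eqP => [->|].
rewrite IHt /=; congr pair; apply/ffunP => w; rewrite !ffunE inE.
case: (w \in ball e t v) => //=; rewrite /learn.
case: pickP => [y | none] /=.
  rewrite IHt; case: ifP => // eyv; rewrite ffunE.
  case: ifP => // wy _.
  by have -> : w \in \bigcup_(y0 | e y0 v) ball e t y0 by apply/bigcupP; exists y.
case: ifP => // /bigcupP [y eyv wy].
by move: (none y); rewrite IHt eyv /= ffunE wy.
Qed.

Lemma flood_correct T :
  (forall x x' u, D x -> D x' -> {in ball e T u, x =1 x'} -> f x u = f x' u) ->
  forall x, D x -> forall u, crun e flood T x u = f x u.
Proof.
move=> local_f x Dx u; rewrite /crun flood_state /=.
case: pickP => [x' /andP[Dx' /forallP cons_x'] | none].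
  apply/esym/local_f => // v vu.
  by move: (cons_x' v); rewrite ffunE vu => /eqP[].
move: (none x); rewrite Dx /= => /negP[].
by apply/forallP => w; rewrite ffunE; case: ifP; rewrite ?eqxx ?orbT.
Qed.

End Flooding.

Unset Implicit Arguments.
Local Close Scope ring_scope.

Theorem mainTheorem7 (n : nat) (e : rel 'I_n) (e_sym : symmetric e)
    (e_irr : irreflexive e) (Sigma : finType) (D : pred {ffun 'I_n -> Sigma})
    (f : {ffun 'I_n -> Sigma} -> {ffun 'I_n -> Sigma}) (T : nat)
    (P : qprotocol n T Sigma) :
  qvalid e P ->
  (forall x, D x -> ((1 / 2 : C) < qprob e P x (f x))%R) ->
  exists (M St : Type) (Q : cprotocol n Sigma M St),
    forall x, D x -> forall u, crun e Q T x u = f x u.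
Proof.
move=> validP succ; exists (flood_st n Sigma), (flood_st n Sigma), (flood D f).
by apply: flood_correct; exact: (output_determined validP succ).
Qed.
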